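(* The SRT-definable transformations are not closed under composition: there exist a linear group $\mathbf{G}=(D,\leq,+)$, finite label sets $\Sigma,\Gamma,\Theta$, a $(\Sigma,\Gamma,\mathbf{G})$-SRT $\mathcal{S}_1$ and a $(\Gamma,\Theta,\mathbf{G})$-SRT $\mathcal{S}_2$ such that the composition $[\![\mathcal{S}_1]\!]\cdot[\![\mathcal{S}_2]\!]$ is not equal to $[\![\mathcal{S}]\!]$ for any $(\Sigma,\Theta,\mathbf{G})$-SRT $\mathcal{S}$.
   Context: A linear group is a triple $\mathbf{G}=(D,\leq,+)$ where $D$ is an infinite set, $\leq$ is a total order on $D$, and $(D,+)$ is a group with identity $0$. For finite label sets $\Sigma$ (input) and $\Gamma$ (output), a $(\Sigma,\Gamma,\mathbf{G})$-streaming register transducer (SRT) is a tuple $\mathcal{S}=(Q,q_0,k,R_0,\Delta)$ where $Q$ is a finite set of states, $q_0\in Q$, $k\in\mathbb{N}$ is the number of registers, $R_0\in D^k$ gives the initial register values, and $\Delta\subseteq Q\times\Sigma\times\{>,=,<\}^k\times\{\mathsf{old},\mathsf{new},\mathsf{add}\}^k\times\{1,\dots,k\}\times\Gamma\times Q$ is a finite set of transitions. A configuration is a pair $(q,R)$ with $q\in Q$, $R\in D^k$. A transition $(q,\sigma,l,m,u,\gamma,q')$ enables the step $(q,R)\xrightarrow[(\gamma,d')]{(\sigma,d)}(q',R')$ iff (1) for every $i$, $d>R[i]$, $d=R[i]$ or $d<R[i]$ according as $l[i]$ is $>$, $=$ or $<$; (2) for every $i$, $R'[i]=R[i]$ if $m[i]=\mathsf{old}$,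 $R'[i]=d$ if $m[i]=\mathsf{new}$, $R'[i]=R[i]+d$ if $m[i]=\mathsf{add}$; (3) $d'=R'[u]$. A run over a finite data word $s\in(\Sigma\times D)^*$ of length $n$ generating $t\in(\Gamma\times D)^*$ is a sequence of $n$ steps from $(q_0,R_0)$, the $i$-th reading $s[i]$ and emitting $t[i]$, each enabled by a transition of $\Delta$. For words $s,t$ of equal length, $s\otimes t$ is the word with $i$-th letter $(s[i],t[i])$. $[\![\mathcal{S}]\!]=\{s\otimes t:\text{there is a run over }s\text{ generating }t\}$. For a set $\mathcal{T}_1$ of words over $(\Sigma\times D)\times(\Gamma\times D)$ and a set $\mathcal{T}_2$ of words over $(\Gamma\times D)\times(\Theta\times D)$, the composition $\mathcal{T}_1\cdot\mathcal{T}_2$ is the set of all $s_1\otimes s_2$ with $s_1\in(\Sigma\times D)^*$, $s_2\in(\Theta\times D)^*$ such that there exists $s_3\in(\Gamma\times D)^*$ with $s_1\otimes s_3\in\mathcal{T}_1$ and $s_3\otimes s_2\in\mathcal{T}_2$. *)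

From mathcomp Require Import all_boot.
From Stdlib Require List.
Set Implicit Arguments. Unset Strict Implicit. Unset Printing Implicit Defensive.

(* A linear group (D, <=, +): D infinite, <= a total order, (D,+) a group
   (not assumed commutative, and no compatibility between order and group). *)
Record linear_group := LinearGroup {
  lg_D : Type;
  lg_le : lg_D -> lg_D -> Prop;
  lg_add : lg_D -> lg_D -> lg_D;
  lg_zero : lg_D;
  lg_opp : lg_D -> lg_D;
  lg_infinite : ~ (exists l : list lg_D, forall x, List.In x l);
  lg_le_refl : forall x, lg_le x x;
  lg_le_antisym : forall x y, lg_le x y -> lg_le y x -> x = y;
  lg_le_trans : forall x y z, lg_le x y -> lg_le y z -> lg_le x z;
  lg_le_total : forall x y, lg_le x y \/ lg_le y x;
  lg_addA : forall x y z, lg_add x (lg_add y z) = lg_add (lg_add x y) z;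
  lg_add0l : forall x, lg_add lg_zero x = x;
  lg_add0r : forall x, lg_add x lg_zero = x;
  lg_addNl : forall x, lg_add (lg_opp x) x = lg_zero;
  lg_addNr : forall x, lg_add x (lg_opp x) = lg_zero
}.

Definition lg_lt (G : linear_group) (x y : lg_D G) : Prop :=
  @lg_le G x y /\ x <> y.

Inductive cmp := CmpGt | CmpEq | CmpLt.
Inductive upd := UpdOld | UpdNew | UpdAdd.

(* A transition (q, sigma, l, m, u, gamma, q'); u ranges over the k registers. *)
Record transition (Sigma Gamma Q : Type) (k : nat) := Transition {
  t_src : Q;
  t_in : Sigma;
  t_cmp : 'I_k -> cmp;
  t_upd : 'I_k -> upd;
  t_out : 'I_k;
  t_lab : Gamma;
  t_dst : Q
}.

Record srt (Sigma Gamma : finType) (G : linear_group) := SRT {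
  srt_Q : finType;
  srt_q0 : srt_Q;
  srt_k : nat;
  srt_R0 : 'I_srt_k -> lg_D G;
  srt_delta : seq (transition Sigma Gamma srt_Q srt_k)
}.

Definition cmp_holds (G : linear_group) (c : cmp) (d r : lg_D G) : Prop :=
  match c with
  | CmpGt => lg_lt r d
  | CmpEq => d = r
  | CmpLt => lg_lt d r
  end.

Definition upd_val (G : linear_group) (m : upd) (r d : lg_D G) : lg_D G :=
  match m with
  | UpdOld => r
  | UpdNew => d
  | UpdAdd => @lg_add G r d
  end.

Definition enables (Sigma Gamma Q : Type) (G : linear_group) (k : nat)
  (tr : transition Sigma Gamma Q k)
  (q : Q) (R : 'I_k -> lg_D G) (a : Sigma * lg_D G) (b : Gamma * lg_D G)
  (q' : Q) (R' : 'I_k -> lg_D G) : Prop :=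
  t_src tr = q /\ t_in tr = a.1 /\ t_lab tr = b.1 /\ t_dst tr = q' /\
  (forall i, @cmp_holds G (t_cmp tr i) a.2 (R i)) /\
  (forall i, R' i = @upd_val G (t_upd tr i) (R i) a.2) /\
  b.2 = R' (t_out tr).

Fixpoint runs_from (Sigma Gamma : finType) (G : linear_group)
  (S : srt Sigma Gamma G) (q : srt_Q S) (R : 'I_(srt_k S) -> lg_D G)
  (w : seq ((Sigma * lg_D G) * (Gamma * lg_D G))) : Prop :=
  match w with
  | [::] => True
  | (a, b) :: w' =>
      exists tr q' R', List.In tr (srt_delta S) /\
        @enables Sigma Gamma (srt_Q S) G (srt_k S) tr q R a b q' R' /\ @runs_from Sigma Gamma G S q' R' w'
  end.

Definition srt_sem (Sigma Gamma : finType) (G : linear_group)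
  (S : srt Sigma Gamma G) (w : seq ((Sigma * lg_D G) * (Gamma * lg_D G))) : Prop :=
  @runs_from Sigma Gamma G S (srt_q0 S) (@srt_R0 Sigma Gamma G S) w.

Definition tensor (A B : Type) (s : seq A) (t : seq B) : seq (A * B) := zip s t.

Definition compose_tr (A B C : Type)
  (T1 : seq (A * B) -> Prop) (T2 : seq (B * C) -> Prop) (w : seq (A * C)) : Prop :=
  exists (s1 : seq A) (s2 : seq C) (s3 : seq B),
    [/\ size s1 = size s2, size s3 = size s1, w = tensor s1 s2,
        T1 (tensor s1 s3) & T2 (tensor s3 s2)].

(* Take G = (Z, <=, +) and let S1 = S2 be the one-register transducer
   outputting the running sum of its input; the composition then outputs
   running sums of running sums, e.g. N, 2N on input N, 0.  A single SRT that
   reads 0 can only keep a register, reset it to 0 or add 0, so its second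
   output arises from some initial register value r by two updates with N and
   0, i.e. lies in {r, N, r + N, 0}.  Choosing N above every initial register
   value rules out 2N. *)

From mathcomp Require Import all_boot.
From Stdlib Require Import ZArith Lia.

Set Implicit Arguments.
Unset Strict Implicit.

Open Scope Z_scope.

Lemma list_upper_bound (A : Type) (f : A -> Z) (l : list A) :
  exists N, 0 < N /\ forall x, List.In x l -> f x < N.
Proof.
elim: l => [|y l [N [N_gt0 ltN]]]; first by exists 1.
exists (Z.max N (f y + 1)); split=> [|x /= [<-|/ltN]]; lia.
Qed.

Lemma In_of_mem (T : eqType) (s : seq T) (x : T) : x \in s -> List.In x s.
Proof.
elim: s => //= y s IHs; rewrite in_cons => /orP[/eqP ->|/IHs]; by [left|right].
Qed.

Lemma fun_upper_bound (T : finType) (f : T -> Z) :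
  exists N, 0 < N /\ forall x, f x < N.
Proof.
have [N [N_gt0 ltN]] := list_upper_bound f (enum T).
by exists N; split=> // x; apply/ltN/In_of_mem; rewrite mem_enum.
Qed.

Lemma Z_infinite : ~ (exists l : list Z, forall x, List.In x l).
Proof.
move=> [l inl]; have [N [_ ltN]] := list_upper_bound id l.
by have := ltN N (inl N); lia.
Qed.

Definition Z_linear_group : linear_group.
Proof.
by refine {| lg_D := Z; lg_le := Z.le; lg_add := Z.add; lg_zero := 0;
             lg_opp := Z.opp; lg_infinite := Z_infinite |}; intros; lia.
Defined.

Lemma cmp_total (d r : Z) : exists c, @cmp_holds Z_linear_group c d r.
Proof.
by case: (Z.lt_total d r) => [|[|]];
  [exists CmpLt | exists CmpEq | exists CmpGt];
  rewrite /= /lg_lt /=; lia.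
Qed.

Definition sum_step (c : cmp) : transition unit unit unit 1 :=
  Transition tt tt (fun _ => c) (fun _ => UpdAdd) ord0 tt tt.

Definition prefix_sum_srt : srt unit unit Z_linear_group :=
  @SRT unit unit Z_linear_group unit tt 1 (fun _ => 0)
    [:: sum_step CmpGt; sum_step CmpEq; sum_step CmpLt].

Fixpoint prefix_sums (r : Z) (ds : seq Z) : seq Z :=
  if ds is d :: ds' then (r + d) :: prefix_sums (r + d) ds' else [::].

Lemma size_prefix_sums r ds : size (prefix_sums r ds) = size ds.
Proof. by elim: ds r => //= d ds IHds r; rewrite IHds. Qed.

Definition unit_word (ds : seq Z) : seq (unit * Z) := [seq (tt, d) | d <- ds].

Lemma prefix_sum_runs_from (r : Z) (ds : seq Z) :
  @runs_from _ _ _ prefix_sum_srt tt (fun _ => r)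
    (tensor (unit_word ds) (unit_word (prefix_sums r ds))).
Proof.
elim: ds r => //= d ds IHds r.
have [c holds] := cmp_total d r.
exists (sum_step c), tt, (fun _ => r + d); split; last split; last exact: IHds.
  by case: c {holds} => /=; tauto.
by do 4 split=> //; split=> [[[|]]|] //.
Qed.

Lemma prefix_sum_sem ds :
  srt_sem prefix_sum_srt (tensor (unit_word ds) (unit_word (prefix_sums 0 ds))).
Proof. exact: prefix_sum_runs_from. Qed.

Lemma compose_prefix_sums ds :
  compose_tr (srt_sem prefix_sum_srt) (srt_sem prefix_sum_srt)
    (tensor (unit_word ds) (unit_word (prefix_sums 0 (prefix_sums 0 ds)))).
Proof.
exists (unit_word ds), (unit_word (prefix_sums 0 (prefix_sums 0 ds))),
  (unit_word (prefix_sums 0 ds)).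
by split; rewrite ?size_map ?size_prefix_sums //; apply: prefix_sum_sem.
Qed.

Lemma runs_from_second_output (Sigma Gamma : finType) (G : linear_group)
    (S : srt Sigma Gamma G) q R a1 b1 a2 b2 :
  @runs_from _ _ _ S q R [:: (a1, b1); (a2, b2)] ->
  exists i u1 u2, b2.2 = upd_val u2 (upd_val u1 (R i) a1.2) a2.2.
Proof.
move=> [tr1 [q1 [R1 [_ [[_ [_ [_ [_ [_ [R1E _]]]]]]
        [tr2 [q2 [R2 [_ [[_ [_ [_ [_ [_ [R2E ->]]]]]] _]]]]]]]]]].
exists (t_out tr2), (t_upd tr1 (t_out tr2)), (t_upd tr2 (t_out tr2)).
by rewrite R2E R1E.
Qed.

Lemma upd_val_after_zero_lt (u1 u2 : upd) (N r : Z) : 0 < N -> r < N ->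
  @upd_val Z_linear_group u2 (@upd_val Z_linear_group u1 r N) 0 < N + N.
Proof. by case: u1; case: u2 => /=; lia. Qed.

Theorem theorem3p14 :
  exists (G : linear_group) (Sigma Gamma Theta : finType)
         (S1 : srt Sigma Gamma G) (S2 : srt Gamma Theta G),
    forall S : srt Sigma Theta G,
      ~ (forall w, compose_tr (srt_sem S1) (srt_sem S2) w <-> srt_sem S w).
Proof.
exists Z_linear_group, unit, unit, unit, prefix_sum_srt, prefix_sum_srt.
move=> S semE.
have [N [N_gt0 R0_ltN]] := fun_upper_bound (@srt_R0 _ _ _ S).
have /semE/runs_from_second_output [i [u1 [u2 /= out]]] :=
  compose_prefix_sums [:: N; 0].
by have := upd_val_after_zero_lt u1 u2 N_gt0 (R0_ltN i); rewrite -out; lia.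
Qed.
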